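(* Let $R$ be a finite group of squarefree order with trivial centre, of the form $R=N\rtimes M$ with $N$ cyclic of order $n$ and $M$ cyclic of order $m$. Suppose that for every pair of primes $p,q$ with $p\mid m$ and $q\mid n$, every subgroup of $R$ of order $pq$ is nonabelian. Let $H$ be a characteristic subgroup of prime index in $R$. If $m$ is not prime, then $\mathbf{C}_{\mathrm{Aut}(R)}(H)=1$, i.e. the only automorphism of $R$ fixing every element of $H$ is the identity.
   Context: $\mathbf{C}_{\mathrm{Aut}(R)}(H)$ denotes the set of automorphisms of $R$ that fix $H$ pointwise. *)

From mathcomp Require Import all_boot all_fingroup all_solvable.
Set Implicit Arguments. Unset Strict Implicit. Unset Printing Implicit Defensive.

Definition squarefree_nat (k : nat) : Prop :=
  forall p : nat, prime p -> ~~ (p * p %| k).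

From mathcomp Require Import all_boot all_fingroup all_solvable.
Set Implicit Arguments.
Unset Strict Implicit.
Unset Printing Implicit Defensive.

Local Open Scope group_scope.

(* The pq-condition forces every nontrivial element of M to act
   fixed-point-freely on N, so R is a Frobenius group with kernel N.
   Then u |-> [u, y] is injective on N for y in M^#, whence N = [N, y] lies in
   R', hence in H because R/H is abelian. Were M :&: H trivial, H = N and
   |M| = |R : H| would be prime; so some z in M^# lies in H. An automorphism a
   fixing H pointwise moves each x of R by x^-1 a(x) in C_R(H), which
   centralizes a nontrivial element of N (so lies in N) and z (so is trivial,
   by fixed-point-freeness). *)

Section FrobeniusCentralizers.

Variable gT : finGroupType.
Implicit Types (G H N M R : {group gT}).

Lemma nonabelian_pq_semiregular R N M :
  N ><| M = R ->
  (forall (p q : nat) (K : {group gT}),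
      prime p -> prime q -> (p %| #|M|)%N -> (q %| #|N|)%N ->
      K \subset R -> #|K| = (p * q)%N -> ~~ abelian K) ->
  semiregular N M.
Proof.
move=> defR nab_pq y /setD1P[nty My]; apply/trivgP/subsetP => v /setIP[Nv cyv].
rewrite inE; apply: contraT => ntv.
have [/andP[sNR _] sMR _ _ tiNM] := sdprod_context defR.
have p_pr : prime (pdiv #[y]) by rewrite pdiv_prime ?order_gt1.
have q_pr : prime (pdiv #[v]) by rewrite pdiv_prime ?order_gt1.
have [z yz oz] := Cauchy p_pr (pdiv_dvd #[y]).
have [w vw ow] := Cauchy q_pr (pdiv_dvd #[v]).
have Mz : z \in M by rewrite (subsetP _ _ yz) ?cycle_subG.
have Nw : w \in N by rewrite (subsetP _ _ vw) ?cycle_subG.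
have cYV : <[y]> \subset 'C(<[v]>) by rewrite cent_cycle cycle_subG cent1C.
have czw : <[z]> \subset 'C(<[w]>).
  by rewrite (subset_trans _ (subset_trans cYV (centS _))) ?cycle_subG.
have := nab_pq _ _ (<[w]> <*> <[z]>)%G p_pr q_pr.
rewrite abelianY !cycle_abelian czw /=; apply.
- by rewrite (dvdn_trans (pdiv_dvd _)) ?order_dvdG.
- by rewrite (dvdn_trans (pdiv_dvd _)) ?order_dvdG.
- by rewrite join_subG !cycle_subG (subsetP sNR) ?(subsetP sMR).
rewrite /= cent_joinEr // TI_cardMg -?orderE ?oz ?ow 1?mulnC //.
by apply/trivgP; rewrite -tiNM setISS ?cycle_subG.
Qed.

Lemma commg_cycle_regular N y :
  y \in 'N(N) -> 'C_N[y] = 1 -> [~: N, <[y]>] = N.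
Proof.
move=> nNy regNy; apply/eqP; rewrite eqEcard commg_subl cycle_subG nNy /=.
pose f u := [~ u, y].
have f_inj : {in N &, injective f}.
  move=> u v Nu Nv fuv; rewrite -(mulgKV v u).
  have : [~ u * v^-1, y] ^ v * f v = f v by rewrite -commMgJ mulgKV.
  move/(canRL (mulgK _)); rewrite mulgV => /eqP; rewrite conjg_eq1.
  move/commgP/cent1P => cy; suff -> : u * v^-1 = 1 by rewrite mul1g.
  by apply/set1gP; rewrite -regNy inE groupM ?groupV.
rewrite -(card_in_imset f_inj) subset_leq_card //.
by apply/subsetP=> _ /imsetP[u Nu ->]; rewrite mem_commg ?cycle_id.
Qed.

Lemma Frobenius_ker_sub_der1 R N M :
  [Frobenius R = N ><| M] -> N \subset R^`(1).
Proof.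
move=> frobR; have [defR _ ntM _ _] := Frobenius_context frobR.
have [/andP[sNR _] sMR _ nNM _] := sdprod_context defR.
have [y My nty] := trivgPn _ ntM.
rewrite -(commg_cycle_regular (subsetP nNM y My) (Frobenius_reg_ker frobR _)).
  by rewrite commgSS ?cycle_subG ?(subsetP sMR).
by rewrite !inE nty.
Qed.

Lemma Frobenius_cent_over_ker R N M H :
  [Frobenius R = N ><| M] -> N \subset H -> M :&: H != 1 -> 'C_R(H) = 1.
Proof.
move=> frobR sNH ntMH; have [_ ntN _ _ _] := Frobenius_context frobR.
have [v Nv ntv] := trivgPn _ ntN.
have N1v : v \in N^# by rewrite !inE ntv.
have sCRH_N : 'C_R(H) \subset N.
  apply: subset_trans (Frobenius_cent1_ker frobR N1v).
  by rewrite setIS // -cent_set1 centS // sub1set (subsetP sNH).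
apply/trivgP; rewrite -(cent_semiregular (Frobenius_reg_ker frobR) (subsetIl M H)) //.
by rewrite subsetI sCRH_N; apply: subIset; rewrite centS ?subsetIr ?orbT.
Qed.

Lemma sdprod_index_over_ker R N M H :
  N ><| M = R -> N \subset H -> H \subset R -> M :&: H = 1 -> #|R : H| = #|M|.
Proof.
move=> defR sNH sHR tiMH; have [_ _ defNM _ _] := sdprod_context defR.
have -> : H :=: N by rewrite -(setIidPr sHR) -defNM -group_modl // tiMH mulg1.
by rewrite (index_sdprod defR).
Qed.

Lemma Aut_fix_cent G H a :
  a \in Aut G -> H <| G -> {in H, forall h, a h = h} ->
  {in G, forall x, x^-1 * a x \in 'C_G(H)}.
Proof.
move=> AutGa /andP[sHG nHG] fixHa x Gx; rewrite inE groupM ?groupV ?Aut_closed //=.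
apply/centP => h Hh; apply/commute_sym/commgP/conjg_fixP.
have Hhx : h ^ x^-1 \in H by rewrite memJ_norm ?groupV ?(subsetP nHG).
rewrite conjgM -{1}(fixHa _ Hhx) -(autmE AutGa) -morphJ ?(subsetP sHG _ Hhx) //=.
by rewrite autmE conjgKV fixHa.
Qed.

End FrobeniusCentralizers.

Theorem lemma3p1 (gT : finGroupType) (R N M H : {group gT}) :
  squarefree_nat #|R| ->
  'Z(R) = 1 ->
  N ><| M = R ->
  cyclic N -> cyclic M ->
  (forall (p q : nat) (K : {group gT}),
      prime p -> prime q -> (p %| #|M|)%N -> (q %| #|N|)%N ->
      K \subset R -> #|K| = (p * q)%N -> ~~ abelian K) ->
  H \char R ->
  prime #|R : H| ->
  ~~ prime #|M| ->
  forall a : {perm gT}, a \in Aut R ->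
    (forall x, x \in H -> a x = x) -> a = 1.
Proof.
move=> _ ZR1 defR cycN cycM nab_pq chH prRH nprM a AutRa fixHa.
have nsHR := char_normal chH; have /andP[sHR nHR] := nsHR.
have [_ _ defNM _ _] := sdprod_context defR.
have nabR : ~~ abelian R.
  apply: contraL prRH => /center_idP cRR.
  by have := dvdn_indexg R H; rewrite -cRR ZR1 cards1 dvdn1 => /eqP ->.
have ntN : N :!=: 1.
  by apply: contra nabR => /eqP N1; rewrite -defNM N1 mul1g cyclic_abelian.
have ntM : M :!=: 1.
  by apply: contra nabR => /eqP M1; rewrite -defNM M1 mulg1 cyclic_abelian.
have frobR : [Frobenius R = N ><| M].
  apply/(Frobenius_semiregularP defR ntN ntM).
  exact: nonabelian_pq_semiregular defR nab_pq.
have sNH : N \subset H.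
  apply: subset_trans (Frobenius_ker_sub_der1 frobR) (der1_min nHR _).
  by rewrite cyclic_abelian // prime_cyclic // card_quotient.
have ntMH : M :&: H != 1.
  apply: contra nprM => /eqP tiMH.
  by rewrite -(sdprod_index_over_ker defR sNH sHR tiMH).
apply/permP => x; rewrite perm1.
case Rx : (x \in R); last by rewrite (out_Aut AutRa) ?Rx.
have := Aut_fix_cent AutRa nsHR fixHa Rx.
rewrite (Frobenius_cent_over_ker frobR sNH ntMH) => /set1gP/(canRL (mulKVg x)).
by rewrite mulg1.
Qed.
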